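(* The population size of Global SEMO (with fitness $f(x)=(Cost(x),LP(x))$) on the weighted vertex cover problem is at all times upper bounded by $2\cdot OPT+1$.
   Context: Weighted vertex cover: $G=(V,E)$, $V=\{v_1,\dots,v_n\}$, $w:V\to\mathbb{N}^+$; $OPT$ is the minimum weight of a vertex cover. Search points $x\in\{0,1\}^n$; $Cost(x)=\sum_i w(v_i)x_i$; $G(x)$ is $G$ with selected vertices and edges having a selected endpoint removed; $LP(x)$ is the optimal value of: minimize $\sum_{v_i\in V(x)}w(v_i)y_i$ s.t. $y_i+y_j\ge1$ for edges $\{v_i,v_j\}$ of $G(x)$, $0\le y_i\le1$. $f(x)\le f(y)$ means componentwise $\le$. Global SEMO: start with a uniformly random $x$, $P=\{x\}$; each iteration choose $x\in P$ uniformly at random, create $x'$ by flipping each bit independently with probability $1/n$; if no $y\in P$ has $f(y)\le f(x')$, add $x'$ to $P$ and delete all other $z\in P$ with $f(x')\le f(z)$. *)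

From HB Require Import structures.
From mathcomp Require Import all_boot all_order all_algebra.
From mathcomp Require Import classical_sets reals.
Set Implicit Arguments. Unset Strict Implicit. Unset Printing Implicit Defensive.
Import Order.TTheory GRing.Theory Num.Theory.

(* Search points x : {ffun 'I_n -> bool}, x i = true iff v_i is selected. *)

Section WVC.
Variables (n : nat) (e : rel 'I_n) (w : 'I_n -> nat).

Definition bits := {ffun 'I_n -> bool}.

Definition Cost (x : bits) : nat := \sum_(i < n) w i * x i.

Definition is_vertex_cover (x : bits) : Prop :=
  forall i j, e i j -> x i || x j.

Definition is_vertex_coverb (x : bits) : bool :=
  [forall i, forall j, e i j ==> (x i || x j)].

(* OPT = minimum weight of a vertex cover (the all-ones vector is a cover,
   so its cost is a valid seed for the minimum). *)
Definition OPT : nat :=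
  \big[minn/Cost [ffun=> true]]_(x : bits | is_vertex_coverb x) Cost x.

Local Open Scope ring_scope.
Local Open Scope classical_set_scope.

(* Feasible solutions of the LP relaxation on G(x): variables y_i for the
   unselected vertices, 0 <= y_i <= 1, y_i + y_j >= 1 for every edge of G(x)
   (both endpoints unselected). *)
Definition LP_feasible {R : realType} (x : bits) (y : 'I_n -> R) : Prop :=
  (forall i, ~~ x i -> 0 <= y i <= 1) /\
  (forall i j, e i j -> ~~ x i -> ~~ x j -> 1 <= y i + y j).

Definition LP_obj {R : realType} (x : bits) (y : 'I_n -> R) : R :=
  \sum_(i < n | ~~ x i) (w i)%:R * y i.

(* LP(x) = optimal value (infimum, which is attained) of the LP. *)
Definition LP {R : realType} (x : bits) : R :=
  inf [set LP_obj x y | y in [set y | LP_feasible x y]].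

Definition fle {R : realType} (a b : bits) : bool :=
  (Cost a <= Cost b)%N && (@LP R a <= @LP R b).

Definition semo_update {R : realType} (P : {set bits}) (x' : bits) : {set bits} :=
  if [exists y in P, @fle R y x'] then P
  else x' |: [set z in P | ~~ @fle R x' z].

(* Standard bit mutation with rate 1/n gives every offspring x' positive
   probability, so any x' may be produced from the selected parent. *)
Inductive reachable {R : realType} : {set bits} -> Prop :=
| reach_init (x : bits) : reachable [set x]
| reach_step (P : {set bits}) (x x' : bits) :
    reachable P -> x \in P -> reachable (@semo_update R P x').

End WVC.

From mathcomp Require Import boolp classical_sets reals.
From mathcomp Require Import all_boot all_order all_algebra.
From mathcomp Require Import lra.
Set Implicit Arguments. Unset Strict Implicit. Unset Printing Implicit Defensive.
Import Order.TTheory GRing.Theory Num.Theory.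

(* Every feasible point of the LP relaxation of vertex cover can be moved, without
   increasing the objective, to a point with all coordinates in {0, 1/2, 1}: shift
   every off-grid coordinate towards 1/2 (or away from it) at unit speed.  Edge
   constraints with endpoints on opposite sides of 1/2 are unaffected, the others
   stay satisfied until some coordinate reaches 0, 1/2 or 1, and the objective is
   affine in the shift, so one of the two extreme shifts is no worse and puts a
   further coordinate on the grid.  Hence LP(x) is a multiple of 1/2 in [0, OPT].
   In a Global SEMO population no member weakly dominates another, so two members
   with the same LP value would be comparable by cost; the LP value is therefore
   injective on the population, which has at most 2 OPT + 1 members. *)

Local Open Scope ring_scope.

Section LPRelaxation.
Variables (R : realType) (n : nat) (e : rel 'I_n) (w : 'I_n -> nat) (x : bits n).
Local Notation feasible := (@LP_feasible n e R x).
Local Notation obj := (@LP_obj n w R x).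
Local Notation h := (2^-1 : R).

Definition offgrid (v : R) : bool := [&& 0 < v, v < 1 & v != h].

Definition offgrid_vertices (y : 'I_n -> R) : {set 'I_n} :=
  [set i | ~~ x i & offgrid (y i)].

Lemma ongridP v : 0 <= v <= 1 -> reflect [\/ v = 0, v = h | v = 1] (~~ offgrid v).
Proof.
case/andP=> v0 v1; apply: (iffP idP) => [|[]->]; rewrite /offgrid ?ltxx ?eqxx ?andbF //.
rewrite !negb_and negbK -!leNgt; case/or3P=> [v_le0|v_ge1|/eqP->].
- by constructor 1; lra.
- by constructor 3; lra.
- by constructor 2.
Qed.

Lemma offgrid_gap v : offgrid v -> 0 < `|v - h| < h.
Proof.
case/and3P=> v0 v1 vh; rewrite normr_gt0 subr_eq0 vh ltr_norml /=.
by apply/andP; split; lra.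
Qed.

Lemma LP_obj_shift (y d : 'I_n -> R) t :
  obj (fun i => y i + t * d i) = obj y + t * obj d.
Proof.
by rewrite /LP_obj mulr_sumr -big_split; apply: eq_bigr => i _; rewrite mulrDr mulrCA.
Qed.

Lemma LP_obj_ge0 y : feasible y -> 0 <= obj y.
Proof.
by case=> bnd _; apply: sumr_ge0 => i /bnd /andP[y0 _]; rewrite mulr_ge0.
Qed.

Section Shift.
Variable y : 'I_n -> R.
Hypothesis feas_y : feasible y.
Local Notation B := (offgrid_vertices y).

Let dir i : R := if i \in B then (if y i < h then 1 else -1) else 0.
Let shift t i := y i + t * dir i.

Lemma shift_cases t i : ~~ x i ->
    (i \in B -> `|y i - h| - h <= t <= `|y i - h|) ->
  [\/ [/\ i \notin B, shift t i = y i & [\/ y i = 0, y i = h | y i = 1]],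
      [/\ 0 < y i < h, `|y i - h| = h - y i, shift t i = y i + t & 0 <= shift t i <= h] |
      [/\ h < y i < 1, `|y i - h| = y i - h, shift t i = y i - t & h <= shift t i <= 1]].
Proof.
rewrite /shift /dir => xi t_range; case: (boolP (i \in B)) => iB; last first.
  rewrite mulr0 addr0; constructor 1; split=> //; apply/ongridP; first exact: feas_y.1.
  by move: iB; rewrite inE xi.
have /andP[lo hi] := t_range iB.
move: iB; rewrite inE xi /= => /and3P[y0 y1].
rewrite neq_lt => /orP[yh|hy].
  have gap : `|y i - h| = h - y i by rewrite ltr0_norm ?opprB ?subr_lt0.
  rewrite yh mulr1; constructor 2; rewrite gap in lo hi.
  by split; rewrite ?gap ?y0 ?yh //; lra.
have gap : `|y i - h| = y i - h by rewrite gtr0_norm ?subr_gt0.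
rewrite ltNge (ltW hy) /= mulrN1; constructor 3; rewrite gap in lo hi.
by split; rewrite ?gap ?y1 ?hy //; lra.
Qed.

Lemma shift_feasible t :
  (forall i, i \in B -> `|y i - h| - h <= t <= `|y i - h|) -> feasible (shift t).
Proof.
move=> t_range; split=> [i xi | i j eij xi xj].
  by case: (shift_cases xi (t_range i)) => [[_ -> _]|[]|[]]; [exact: feas_y.1|lra|lra].
have := feas_y.2 i j eij xi xj.
case: (shift_cases xi (t_range i)) => [[_ -> [] ->]|[]|[]];
case: (shift_cases xj (t_range j)) => [[_ -> [] ->]|[]|[]]; lra.
Qed.

Lemma offgrid_vertices_shift t : offgrid_vertices (shift t) \subset B.
Proof.
apply/subsetP=> i; rewrite inE => /andP[xi]; apply: contraTT.
rewrite /shift /dir => iB; rewrite (negbTE iB) mulr0 addr0; move: iB.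
by rewrite inE xi.
Qed.

Lemma round_step : B != set0 ->
  exists y', [/\ feasible y', obj y' <= obj y & offgrid_vertices y' \proper B].
Proof.
case/set0Pn=> i0 i0B; pose gap i := `|y i - h|.
have gapB i : i \in B -> 0 < gap i < h by rewrite inE => /andP[_ /offgrid_gap].
case: (arg_maxP gap i0B) => ilo iloB max_lo.
case: (arg_minP gap i0B) => ihi ihiB min_hi.
have [gap_lo gap_hi] := (gapB ilo iloB, gapB ihi ihiB).
pose D := obj dir; pose t := if 0 <= D then gap ilo - h else gap ihi.
have xB i : i \in B -> ~~ x i by rewrite inE => /andP[].
have t_range i : i \in B -> gap i - h <= t <= gap i.
  move=> iB; have : gap i <= gap ilo := max_lo i iB.
  have := min_hi i iB; have := gapB i iB.
  by rewrite /t; case: ifP => _; lra.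
have feas_t := shift_feasible t_range.
exists (shift t); split=> //.
  rewrite LP_obj_shift -/D; suff : t * D <= 0 by lra.
  rewrite /t; case: (leP 0 D) => D0.
    by apply: mulr_le0_ge0 => //; lra.
  by apply: mulr_ge0_le0; lra.
have [j jB j_grid] :
    exists2 j, j \in B & [\/ shift t j = 0, shift t j = h | shift t j = 1].
  case: (boolP (0 <= D)) => D0; [exists ilo | exists ihi] => //.
    case: (shift_cases (xB _ iloB) (t_range ilo)) => [[]|[_ g -> _]|[_ g -> _]].
    - by move/negP/(_ iloB).
    - by rewrite /t D0 /gap g; constructor 1; lra.
    - by rewrite /t D0 /gap g; constructor 3; lra.
  case: (shift_cases (xB _ ihiB) (t_range ihi)) => [[]|[_ g -> _]|[_ g -> _]].
  - by move/negP/(_ ihiB).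
  - by rewrite /t (negbTE D0) /gap g; constructor 2; lra.
  - by rewrite /t (negbTE D0) /gap g; constructor 2; lra.
rewrite properE offgrid_vertices_shift /=; apply/subsetPn; exists j => //.
by rewrite inE xB //=; apply/ongridP => //; exact: feas_t.1 _ (xB j jB).
Qed.

End Shift.

Lemma LP_round y : feasible y ->
  exists2 y', feasible y' & obj y' <= obj y /\ offgrid_vertices y' = set0.
Proof.
move: {2}#|offgrid_vertices y| (leqnn #|offgrid_vertices y|) => N.
elim: N y => [|N IH] y card_y feas_y.
  by exists y => //; split=> //; apply/eqP; rewrite -cards_eq0 -leqn0.
have [ongrid|nonempty_y] := eqVneq (offgrid_vertices y) set0; first by exists y.
have [y1 [feas_y1 obj_y1 proper_y1]] := round_step feas_y nonempty_y.
have [|y2 feas_y2 [obj_y2 ongrid_y2]] := IH y1 _ feas_y1.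
  by rewrite -ltnS (leq_trans (proper_card proper_y1)).
by exists y2 => //; split=> //; apply: le_trans obj_y1.
Qed.

Lemma LP_obj_ongrid y : feasible y -> offgrid_vertices y = set0 ->
  exists k : nat, obj y = k%:R / 2.
Proof.
move=> [bnd _] ongrid.
pose twice v : nat := if v == 0 then 0 else if v == h then 1 else 2.
exists (\sum_(i < n | ~~ x i) w i * twice (y i))%N.
rewrite natr_sum mulr_suml; apply: eq_bigr => i xi; rewrite natrM.
have /ongridP : ~~ offgrid (y i).
  by apply/negP => off; have := in_set0 i; rewrite -ongrid inE xi off.
have [h_neq0 h_neq1] : (h == 0) = false /\ ((1 : R) == h) = false.
  by split; apply/eqP; lra.
by case/(_ (bnd i xi))=> ->; rewrite /twice ?eqxx ?h_neq0 ?oner_eq0 ?h_neq1; lra.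
Qed.

Lemma LP_le_obj y : feasible y -> @LP n e w R x <= obj y.
Proof.
move=> feas_y; apply: ge_inf; last by exists y.
by exists 0 => _ [z feas_z <-]; exact: LP_obj_ge0.
Qed.

Lemma LP_half_integral : exists k : nat, @LP n e w R x = k%:R / 2.
Proof.
pose attained k := `[< exists2 y, feasible y & obj y = k%:R / 2 >].
have attainedP y : feasible y -> exists2 k, attained k & k%:R / 2 <= obj y.
  move=> /LP_round[y' feas_y' [le_y' /(LP_obj_ongrid feas_y')[k obj_k]]].
  by exists k; [apply/asboolP; exists y' | rewrite -obj_k].
have one_feasible : feasible (fun=> 1) by split=> *; rewrite ?ler01 ?lexx //; lra.
have [k0 attained_k0 _] := attainedP _ one_feasible.
case: (@ex_minnP attained (ex_intro _ k0 attained_k0)).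
move=> k /asboolP[y feas_y obj_y] k_min.
exists k; apply/eqP; rewrite eq_le; apply/andP; split.
  by rewrite -obj_y; apply: LP_le_obj.
apply: lb_le_inf; first by exists (obj y), y.
move=> _ [z /attainedP[j /k_min k_le_j obj_j] <-]; apply: le_trans obj_j.
by rewrite -(ler_nat R) in k_le_j; lra.
Qed.

Lemma LP_le_Cost c : is_vertex_coverb e c -> @LP n e w R x <= (Cost w c)%:R.
Proof.
move=> cover; pose y i : R := (c i)%:R.
have feas_y : feasible y.
  split=> [i _|i j eij _ _]; first by rewrite /y; case: (c i); rewrite ?lexx ?ler01.
  have := implyP (forallP (forallP cover i) j) eij.
  by rewrite /y; case: (c i); case: (c j) => //= _; lra.
apply: le_trans (LP_le_obj feas_y) _.
rewrite /LP_obj /Cost natr_sum [X in _ <= X](bigID (fun i => ~~ x i)) /=.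
rewrite -[X in X <= _]addr0.
apply: lerD; last exact: sumr_ge0.
by apply: ler_sum => i _; rewrite natrM.
Qed.

Lemma LP_le_OPT : @LP n e w R x <= (OPT e w)%:R.
Proof.
rewrite /OPT; apply: (big_ind (fun m => @LP n e w R x <= m%:R)) => [||c].
- by apply: LP_le_Cost; apply/forallP=> i; apply/forallP=> j; rewrite !ffunE implybT.
- by move=> a b; rewrite /minn; case: ifP.
- exact: LP_le_Cost.
Qed.

Lemma twice_LP_le_OPT :
  exists k : nat, (@LP n e w R x == k%:R / 2) && (k <= 2 * OPT e w)%N.
Proof.
have [k LP_k] := LP_half_integral; exists k.
rewrite LP_k eqxx /= -(ler_nat R) natrM.
by have := LP_le_OPT; rewrite LP_k; lra.
Qed.

End LPRelaxation.

Lemma reachable_antichain (R : realType) n (e : rel 'I_n) (w : 'I_n -> nat)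
    (P : {set bits n}) :
  @reachable n e w R P -> {in P &, forall a b, @fle n e w R a b -> a = b}.
Proof.
elim=> [x0 | Q x x' _ IH _] a b; first by rewrite !inE => /eqP-> /eqP->.
rewrite /semo_update; case: ifP => [_|/negbT]; first exact: IH.
rewrite negb_exists => /forallP undominated.
rewrite !inE => /orP[/eqP->|/andP[aQ a_undom]] /orP[/eqP->|/andP[bQ b_undom]] //.
- by rewrite (negbTE b_undom).
- by move=> le_ax'; have := undominated a; rewrite aQ le_ax'.
- exact: IH.
Qed.

Theorem lemma3 (R : realType) (n : nat) (e : rel 'I_n) (w : 'I_n -> nat)
  (e_sym : symmetric e) (e_irr : irreflexive e) (w_pos : forall i, (0 < w i)%N)
  (P : {set bits n}) :
  @reachable n e w R P -> (#|P| <= 2 * OPT e w + 1)%N.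
Proof.
move=> reach; pose k y := xchoose (twice_LP_le_OPT R e w y).
have k_spec y : @LP n e w R y = (k y)%:R / 2 /\ (k y <= 2 * OPT e w)%N.
  by have /andP[/eqP] := xchooseP (twice_LP_le_OPT R e w y).
clearbody k; pose f y : 'I_(2 * OPT e w).+1 := inord (k y).
have f_inj : {in P &, injective f}.
  move=> a b aP bP /(congr1 val).
  rewrite /= !inordK ?ltnS ?(k_spec a).2 ?(k_spec b).2 // => k_ab.
  have LP_ab : @LP n e w R a = @LP n e w R b.
    by rewrite (k_spec a).1 (k_spec b).1 k_ab.
  have [le_ab|lt_ba] := leqP (Cost w a) (Cost w b).
    by apply: (reachable_antichain reach) => //; rewrite /fle le_ab LP_ab lexx.
  by apply/esym/(reachable_antichain reach) => //; rewrite /fle ltnW // LP_ab lexx.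
by rewrite addn1 -[X in (_ <= X)%N](card_ord (2 * OPT e w).+1) (leq_card_in _ _ f_inj).
Qed.
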